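(* Let $\boldsymbol{z}^{(0)}=(z^{(0)}_1,\dots,z^{(0)}_n)\in[-1,1]^n$ with $\sum_{j=1}^nz^{(0)}_j=0$. Define $\boldsymbol{z}^{(1)},\boldsymbol{z}^{(2)},\dots$ recursively: for each $r\ge0$, let $i$ be the first index at which $\boldsymbol{z}^{(r)}$ attains its minimum and $\ell$ the first index at which it attains its maximum; $\boldsymbol{z}^{(r+1)}$ agrees with $\boldsymbol{z}^{(r)}$ except that $z^{(r+1)}_i=z^{(r+1)}_\ell=(z^{(r)}_i+z^{(r)}_\ell)/2$. Then $\boldsymbol{z}^{(n)}\in[-\tfrac12,\tfrac12]^n$. *)

From mathcomp Require Import all_boot all_order all_algebra.
Set Implicit Arguments. Unset Strict Implicit. Unset Printing Implicit Defensive.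
Import Order.TTheory GRing.Theory Num.Theory.
Local Open Scope ring_scope.

Section Balancing.
Variables (R : realFieldType) (n : nat).

(* The vector z = (z_1,...,z_n) is represented as z : 'I_n -> R, with
   coordinate j (0-based) being z j.  The list of coordinates in order: *)
Definition coords (z : 'I_n -> R) : seq R := [seq z j | j <- enum 'I_n].

Definition first_min (z : 'I_n -> R) : nat :=
  find (fun x => all (fun y => x <= y) (coords z)) (coords z).
Definition first_max (z : 'I_n -> R) : nat :=
  find (fun x => all (fun y => y <= x) (coords z)) (coords z).

Definition balance_step (z : 'I_n -> R) : 'I_n -> R :=
  let i := first_min z in
  let l := first_max z in
  let a := (nth 0 (coords z) i + nth 0 (coords z) l) / 2 in
  fun j => if (val j == i) || (val j == l) then a else z j.

Definition balance_iter (r : nat) (z0 : 'I_n -> R) : 'I_n -> R :=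
  iter r balance_step z0.

End Balancing.

From mathcomp Require Import all_boot all_order all_algebra.
From mathcomp Require Import ring lra.
Import Order.TTheory GRing.Theory Num.Theory.
Local Open Scope ring_scope.

(* Since the entries sum to 0, the minimum is <= 0 <= the maximum, so if all
   entries lie in [-c, c] their average lies in [-c/2, c/2], and the bound c
   is preserved.  If some entry lies outside [-c/2, c/2], then so does the
   minimum or the maximum; a step therefore removes at least one such entry
   and creates none, and after n steps none is left. *)

Section Balancing.
Variables (R : realFieldType) (n : nat).
Implicit Types (z : 'I_n -> R) (c : R).

Definition average_at z (i l : 'I_n) : 'I_n -> R :=
  fun j => if (j == i) || (j == l) then (z i + z l) / 2 else z j.

Lemma nth_coords z (i : 'I_n) : nth 0 (coords z) i = z i.
Proof. by rewrite (nth_map i) ?size_enum_ord // nth_ord_enum. Qed.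

Lemma find_coordsP z (P : pred R) :
  (exists j, P (z j)) -> exists2 i : 'I_n, val i = find P (coords z) & P (z i).
Proof.
move=> [j Pj]; have hasP_z : has P (coords z).
  by apply/hasP; exists (z j) => //; apply: map_f; rewrite mem_enum.
have lt_find : (find P (coords z) < n)%N.
  by move: hasP_z; rewrite has_find size_map size_enum_ord.
by exists (Ordinal lt_find); rewrite // -nth_coords nth_find.
Qed.

Lemma first_minP z (i0 : 'I_n) :
  exists2 i : 'I_n, val i = first_min z & forall j, z i <= z j.
Proof.
rewrite /first_min; have [m _ min_m] := arg_minP z (isT : predT i0).
have [|i <- /allP min_i] := find_coordsP z (fun x => all (fun y => x <= y) (coords z)).
  by exists m; apply/allP => _ /mapP[j _ ->]; apply: min_m.
by exists i => // j; apply/min_i/map_f; rewrite mem_enum.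
Qed.

Lemma first_maxP z (i0 : 'I_n) :
  exists2 l : 'I_n, val l = first_max z & forall j, z j <= z l.
Proof.
rewrite /first_max; have [m _ max_m] := arg_maxP z (isT : predT i0).
have [|l <- /allP max_l] := find_coordsP z (fun x => all (fun y => y <= x) (coords z)).
  by exists m; apply/allP => _ /mapP[j _ ->]; apply: max_m.
by exists l => // j; apply/max_l/map_f; rewrite mem_enum.
Qed.

Lemma balance_stepE z (i0 : 'I_n) :
  exists i l : 'I_n, [/\ forall j, z i <= z j, forall j, z j <= z l
                       & balance_step z = average_at z i l].
Proof.
have [i vi min_i] := first_minP z i0; have [l vl max_l] := first_maxP z i0.
by exists i, l; split=> //; rewrite /balance_step -vi -vl !nth_coords.
Qed.

Lemma sum_average_at z (i l : 'I_n) :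
  \sum_j average_at z i l j = \sum_j z j.
Proof.
rewrite /average_at; have [<-|ne_li] := eqVneq l i.
  by apply: eq_bigr => j _; rewrite orbb; case: eqP => [->|] //; field.
rewrite [LHS](bigD1 i) // [RHS](bigD1 i) //=.
rewrite (bigD1 l (P := fun j => j != i)) ?ne_li //=.
rewrite [X in _ = _ + X](bigD1 l (P := fun j => j != i)) ?ne_li //=.
rewrite !eqxx orbT !addrA; congr (_ + _); first by field.
by apply: eq_bigr => j /andP[/negPf-> /negPf->].
Qed.

Lemma min_le0 z (i : 'I_n) :
  \sum_j z j = 0 -> (forall j, z i <= z j) -> z i <= 0.
Proof.
move=> sum0 min_i; have : \sum_(j < n) z i <= \sum_j z j by apply: ler_sum => j _.
by rewrite sum0 sumr_const card_ord pmulrn_lle0 // (leq_ltn_trans _ (ltn_ord i)).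
Qed.

Lemma max_ge0 z (l : 'I_n) :
  \sum_j z j = 0 -> (forall j, z j <= z l) -> 0 <= z l.
Proof.
move=> sum0 max_l; rewrite -oppr_le0.
by apply: (@min_le0 (fun j => - z j)) => [|j]; rewrite ?sumrN ?sum0 ?oppr0 ?lerN2.
Qed.

Lemma norm_average_le a b c :
  a <= 0 <= b -> `|a| <= c -> `|b| <= c -> `|(a + b) / 2| <= c / 2.
Proof. by move=> /andP[? ?]; rewrite !ler_norml => /andP[? ?] /andP[? ?]; lra. Qed.

Definition zero_sum_within c z := \sum_j z j = 0 /\ forall j, `|z j| <= c.

Definition outliers c z : {set 'I_n} := [set j | c / 2 < `|z j|].

Section ExtremePair.
Variables (c : R) (z : 'I_n -> R) (i l : 'I_n).
Hypotheses (zz : zero_sum_within c z)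
           (min_i : forall j, z i <= z j) (max_l : forall j, z j <= z l).

Lemma norm_average_at_extremes : `|(z i + z l) / 2| <= c / 2.
Proof.
case: zz => sum0 le_c; apply: norm_average_le => //.
by rewrite min_le0 ?max_ge0.
Qed.

Lemma zero_sum_within_average_at : zero_sum_within c (average_at z i l).
Proof.
case: zz => sum0 le_c; split=> [|j]; first by rewrite sum_average_at.
rewrite /average_at; case: ifP => // _.
have := norm_average_at_extremes; have := le_c i; rewrite !ler_norml.
by move=> /andP[? ?] /andP[? ?]; lra.
Qed.

Lemma outliers_average_at :
  outliers c (average_at z i l) \subset outliers c z :\: [set i; l].
Proof.
apply/subsetP => j; rewrite !inE /average_at.
by case: ifP => [_|_ ->]; rewrite ?ltNge ?norm_average_at_extremes.
Qed.

Lemma extreme_outlier :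
  outliers c z != set0 -> (i \in outliers c z) || (l \in outliers c z).
Proof.
case/set0Pn => j; rewrite !inE !ltr_normr => /orP[lt_cj|lt_cNj].
  by rewrite (lt_le_trans lt_cj (max_l j)) !orbT.
by rewrite [c / 2 < - z i](lt_le_trans lt_cNj) ?lerN2 ?orbT.
Qed.

Lemma card_outliers_average_at :
  (#|outliers c (average_at z i l)| <= #|outliers c z|.-1)%N.
Proof.
have [out0|/extreme_outlier out_il] := eqVneq (outliers c z) set0.
  by move: outliers_average_at; rewrite out0 set0D subset0 => /eqP->; rewrite cards0.
have [k out_k il_k] : exists2 k, k \in outliers c z & k \in [set i; l].
  by case/orP: out_il => ?; [exists i | exists l]; rewrite ?set21 ?set22.
rewrite (cardsD1 k (outliers c z)) out_k add1n /=.
rewrite (leq_trans (subset_leq_card outliers_average_at)) //.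
by apply/subset_leq_card/setDS; rewrite sub1set.
Qed.

End ExtremePair.

Arguments card_outliers_average_at {c z i l}.

Lemma balance_iter_outliers {c z0} (i0 : 'I_n) r :
  zero_sum_within c z0 ->
  zero_sum_within c (balance_iter r z0) /\ (#|outliers c (balance_iter r z0)| <= n - r)%N.
Proof.
move=> zz0; elim: r => [|r [zz card_r]].
  by split=> //; rewrite subn0 -[X in (_ <= X)%N](card_ord n) max_card.
rewrite /balance_iter iterS -/(balance_iter r z0).
have [i [l [min_i max_l ->]]] := balance_stepE (balance_iter r z0) i0.
split; first exact: zero_sum_within_average_at.
rewrite subnS (leq_trans (card_outliers_average_at zz min_i max_l)) //.
by rewrite -!subn1 leq_sub2r.
Qed.

Lemma balance_iter_bound c z0 :
  zero_sum_within c z0 -> forall j, `|balance_iter n z0 j| <= c / 2.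
Proof.
move=> zz0 j; have [_] := balance_iter_outliers j n zz0.
rewrite subnn leqn0 cards_eq0 => /eqP out0.
by have := in_set0 j; rewrite -out0 inE ltNge => /negbFE.
Qed.

End Balancing.

Theorem lemma2p6 (R : realFieldType) (n : nat) (z0 : 'I_n -> R) :
  (forall j, -1 <= z0 j <= 1) ->
  \sum_(j < n) z0 j = 0 ->
  forall j, - (1 / 2) <= balance_iter n z0 j <= 1 / 2.
Proof.
move=> bounded sum0 j; rewrite -ler_norml.
by apply: balance_iter_bound; split=> // k; rewrite ler_norml.
Qed.
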